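(* For every $[\rho]\in\mathcal{P}_5$ and every $t\in\mathbb{R}$, one has $\Phi^t_{a_1}([\rho])\in\mathcal{P}_5$ and $\Phi^t_{[a_1,b_1]}([\rho])\in\mathcal{P}_5$.
   Context: $S$ closed oriented genus 2, $\pi_1S=\langle a_1,b_1,a_2,b_2 : [a_1,b_1][a_2,b_2]=1\rangle$, $\Gamma=\langle q_1,\dots,q_6: q_i^2=1, q_1\cdots q_6=1\rangle\supset\pi_1S$ via $a_1\mapsto q_3q_2$, $b_1\mapsto q_1q_2$, $a_2\mapsto q_6q_5$, $b_2\mapsto q_4q_5$. $\mathcal{P}_5\subset\chi(S,\mathrm{PSL}_2(\mathbb{R}))$ is the set of conjugacy classes of restrictions to $\pi_1S$ of representations $\bar\rho\colon\Gamma\to\mathrm{PSL}_2(\mathbb{R})$ whose kernel contains $q_5$ and no other $q_i$; for such $\rho$, $\rho(a_1),\rho(b_1),\rho([a_1,b_1])$ are hyperbolic and $\rho(a_2),\rho(b_2)$ are elliptic of angle $\pi$. Let $U$ be the open set of classes with Euler number $\pm1$ for which $\rho(a_1)$ and $\rho([a_1,b_1])$ are hyperbolic; for $x\in\{a_1,[a_1,b_1]\}$, $\ell_x\colon U\to\mathbb{R}_{>0}$ is the translation length of $\rho(x)$ and $\Phi^t_x$ its Hamiltonian flow for the Goldman symplectic form. Concretely, writing $\xi_\rho(t)$, $\zeta_\rho(t)$ for the one-parameter groups of hyperbolic elements with the same axes as $\rho(a_1)$, resp. $\rho([a_1,b_1])$, translating by $t$ (so $\rho(a_1)=\xi_\rho(\ell_{a_1})$,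 $\rho([a_1,b_1])=\zeta_\rho(\ell_{[a_1,b_1]})$), $\Phi^t_{a_1}$ lifts to $a_1\mapsto\rho(a_1)$, $b_1\mapsto\rho(b_1)\xi_\rho(t)^{-1}$, $a_2\mapsto\rho(a_2)$, $b_2\mapsto\rho(b_2)$, and $\Phi^t_{[a_1,b_1]}$ lifts to $a_1\mapsto\rho(a_1)$, $b_1\mapsto\rho(b_1)$, $a_2\mapsto\zeta_\rho(t)\rho(a_2)\zeta_\rho(t)^{-1}$, $b_2\mapsto\zeta_\rho(t)\rho(b_2)\zeta_\rho(t)^{-1}$. *)

From Stdlib Require Import Reals.
Open Scope R_scope.

(** Elements of PSL_2(R) are represented by matrices of
    determinant 1 (elements of SL_2(R)), two such representing the same
    element of PSL_2(R) iff they are equal up to sign ([peq]). *)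
Record M2 := mkM2 { e11 : R; e12 : R; e21 : R; e22 : R }.

Definition mid : M2 := mkM2 1 0 0 1.
Definition mmul (A B : M2) : M2 :=
  mkM2 (e11 A * e11 B + e12 A * e21 B) (e11 A * e12 B + e12 A * e22 B)
       (e21 A * e11 B + e22 A * e21 B) (e21 A * e12 B + e22 A * e22 B).
Definition madd (A B : M2) : M2 :=
  mkM2 (e11 A + e11 B) (e12 A + e12 B) (e21 A + e21 B) (e22 A + e22 B).
Definition mscale (k : R) (A : M2) : M2 :=
  mkM2 (k * e11 A) (k * e12 A) (k * e21 A) (k * e22 A).
Definition mopp (A : M2) : M2 := mscale (-1) A.
Definition mdet (A : M2) : R := e11 A * e22 A - e12 A * e21 A.
Definition mtr (A : M2) : R := e11 A + e22 A.
(** inverse of a determinant-1 matrix (adjugate) *)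
Definition minv (A : M2) : M2 := mkM2 (e22 A) (- e12 A) (- e21 A) (e11 A).

Definition SL2 (A : M2) : Prop := mdet A = 1.
Definition peq (A B : M2) : Prop := A = B \/ A = mopp B.

Definition comm (A B : M2) : M2 := mmul (mmul A B) (mmul (minv A) (minv B)).

Definition hyperbolic (A : M2) : Prop := SL2 A /\ 2 < Rabs (mtr A).

(** Translation length of a hyperbolic element: |tr A| = 2 cosh(l/2). *)
Definition halftr (A : M2) : R := Rabs (mtr A) / 2.
Definition transl_length (A : M2) : R :=
  2 * ln (halftr A + sqrt (halftr A * halftr A - 1)).

(** The one-parameter group xi_A(t) of hyperbolic elements with the same axis
    (and translation direction) as the hyperbolic element A, translating by t,
    so that xi_A(transl_length A) = A in PSL_2(R).  Writing A0 = sign(tr A) A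
    (the lift of trace 2 cosh(l/2) > 2), A0 = P diag(e^{l/2},e^{-l/2}) P^{-1}
    and xi_A(t) = P diag(e^{t/2},e^{-t/2}) P^{-1}
                = cosh(t/2) I + sinh(t/2)/sinh(l/2) (A0 - cosh(l/2) I). *)
Definition trsign (A : M2) : R := if Rlt_dec (mtr A) 0 then -1 else 1.
Definition oneparam (A : M2) (t : R) : M2 :=
  let c := halftr A in
  let s := sqrt (c * c - 1) in
  madd (mscale (cosh (t / 2)) mid)
       (mscale (sinh (t / 2) / s) (madd (mscale (trsign A) A) (mscale (- c) mid))).

(** Representations of Gamma = <q1..q6 | q_i^2 = 1, q1...q6 = 1> into
    PSL_2(R), given by lifts q 1, ..., q 6 in SL_2(R). *)
Definition GammaRep (q : nat -> M2) : Prop :=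
  (forall i, (1 <= i <= 6)%nat -> SL2 (q i) /\ peq (mmul (q i) (q i)) mid) /\
  peq (mmul (q 1%nat) (mmul (q 2%nat) (mmul (q 3%nat)
        (mmul (q 4%nat) (mmul (q 5%nat) (q 6%nat)))))) mid.

Definition kernel_q5_only (q : nat -> M2) : Prop :=
  peq (q 5%nat) mid /\
  (forall i, (1 <= i <= 6)%nat -> i <> 5%nat -> ~ peq (q i) mid).

(** Representations of pi_1 S = <a1,b1,a2,b2 | [a1,b1][a2,b2] = 1> into
    PSL_2(R), given by (lifts of) the images of the generators. *)
Record SRep := mkSRep { ra1 : M2; rb1 : M2; ra2 : M2; rb2 : M2 }.

Definition restrict (q : nat -> M2) : SRep :=
  mkSRep (mmul (q 3%nat) (q 2%nat)) (mmul (q 1%nat) (q 2%nat))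
         (mmul (q 6%nat) (q 5%nat)) (mmul (q 4%nat) (q 5%nat)).

Definition conjugate (rho rho' : SRep) : Prop :=
  exists g : M2, SL2 g /\
    peq (ra1 rho') (mmul g (mmul (ra1 rho) (minv g))) /\
    peq (rb1 rho') (mmul g (mmul (rb1 rho) (minv g))) /\
    peq (ra2 rho') (mmul g (mmul (ra2 rho) (minv g))) /\
    peq (rb2 rho') (mmul g (mmul (rb2 rho) (minv g))).

Definition inP5 (rho : SRep) : Prop :=
  exists q : nat -> M2, GammaRep q /\ kernel_q5_only q /\ conjugate (restrict q) rho.

(** Lifts of the Hamiltonian flows of l_{a1} and l_{[a1,b1]}. *)
Definition flow_a1 (t : R) (rho : SRep) : SRep :=
  mkSRep (ra1 rho) (mmul (rb1 rho) (minv (oneparam (ra1 rho) t)))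
         (ra2 rho) (rb2 rho).

Definition flow_c1 (t : R) (rho : SRep) : SRep :=
  let z := oneparam (comm (ra1 rho) (rb1 rho)) t in
  mkSRep (ra1 rho) (rb1 rho)
         (mmul z (mmul (ra2 rho) (minv z))) (mmul z (mmul (rb2 rho) (minv z))).

(** Both flows are realised on the level of the lifts [q] of the
    representations of [Gamma].  The flow of [l_{a1}] right-multiplies
    [rho(b1) = q1 q2] by [xi^-1], with [xi] in the one-parameter group of
    [rho(a1) = q3 q2]; conjugation by the involutions [q2] and [q3] inverts
    [q3 q2], hence also [xi], so [q2 xi^-1] and [q3 xi^-1] are again
    involutions, and replacing [q2], [q3] by them gives a lift of the same
    kind restricting to the flowed representation.  The flow of
    [l_{[a1,b1]}] conjugates [rho(a2)] and [rho(b2)] by [zeta] commuting with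
    [[a1,b1] = - (q3 q2 q1)^2]; as [q4 q5 q6 = +- q3 q2 q1], conjugating
    [q4], [q5], [q6] by [zeta] preserves the relation of [Gamma].
    The flows stay in [SL_2] because [q3 q2] and [q3 q2 q1 = +- q4 q6] are
    hyperbolic: by a reverse Cauchy-Schwarz inequality, the product of two
    distinct involutions of [PSL_2(R)] is hyperbolic, and [q3 = +- q2] or
    [q4 = +- q6] would force a product of two involutions to have trace 0. *)

From Pilot Require Import Defs.
From Stdlib Require Import Reals Lra Psatz Lia Nsatz.
Open Scope R_scope.

Lemma M2_ext (A B : M2) :
  e11 A = e11 B -> e12 A = e12 B -> e21 A = e21 B -> e22 A = e22 B -> A = B.
Proof. destruct A, B; simpl; intros; subst; reflexivity. Qed.

Ltac m2_unfold := unfold SL2, mmul, madd, mscale, minv, mopp, mid, mdet, mtr in *; simpl in *.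
Ltac m2_ring :=
  repeat match goal with A : M2 |- _ => destruct A end; m2_unfold;
  (apply M2_ext; simpl; ring) || ring.

Lemma mmulA A B C : mmul (mmul A B) C = mmul A (mmul B C). Proof. m2_ring. Qed.
Lemma mul1m A : mmul mid A = A. Proof. m2_ring. Qed.
Lemma mulm1 A : mmul A mid = A. Proof. m2_ring. Qed.
Lemma mscale_mull k A B : mmul (mscale k A) B = mscale k (mmul A B). Proof. m2_ring. Qed.
Lemma mscale_mulr k A B : mmul A (mscale k B) = mscale k (mmul A B). Proof. m2_ring. Qed.
Lemma mscaleA k l A : mscale k (mscale l A) = mscale (k * l) A. Proof. m2_ring. Qed.
Lemma mscale1 A : mscale 1 A = A. Proof. m2_ring. Qed.
Lemma minv_mul A B : minv (mmul A B) = mmul (minv B) (minv A). Proof. m2_ring. Qed.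
Lemma minv_mscale k A : minv (mscale k A) = mscale k (minv A). Proof. m2_ring. Qed.
Lemma minv1 : minv mid = mid. Proof. m2_ring. Qed.
Lemma mdetM A B : mdet (mmul A B) = mdet A * mdet B. Proof. m2_ring. Qed.
Lemma mdet_minv A : mdet (minv A) = mdet A. Proof. m2_ring. Qed.
Lemma mdet_mscale k A : mdet (mscale k A) = k * k * mdet A. Proof. m2_ring. Qed.
Lemma mtr_mscale k A : mtr (mscale k A) = k * mtr A. Proof. m2_ring. Qed.
Lemma mtr_mid : mtr mid = 2. Proof. m2_ring. Qed.
Lemma mtrC A B : mtr (mmul A B) = mtr (mmul B A). Proof. m2_ring. Qed.

Lemma mmul_eq_assoc A B C D : mmul A B = mmul C D ->
  forall X, mmul A (mmul B X) = mmul C (mmul D X).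
Proof. intros E X. rewrite <- !mmulA, E. reflexivity. Qed.

Ltac mnorm :=
  repeat progress rewrite ?minv_mul, ?minv_mscale, ?mmulA,
    ?mscale_mull, ?mscale_mulr, ?mscaleA, ?mul1m, ?mulm1.

Lemma mulmV A : SL2 A -> mmul A (minv A) = mid.
Proof. intro H. destruct A; m2_unfold. apply M2_ext; simpl; lra. Qed.
Lemma mulVm A : SL2 A -> mmul (minv A) A = mid.
Proof. intro H. destruct A; m2_unfold. apply M2_ext; simpl; lra. Qed.
Lemma mulKm A X : SL2 A -> mmul (minv A) (mmul A X) = X.
Proof. intro H. rewrite <- mmulA, mulVm, mul1m by exact H. reflexivity. Qed.
Lemma mulKVm A X : SL2 A -> mmul A (mmul (minv A) X) = X.
Proof. intro H. rewrite <- mmulA, mulmV, mul1m by exact H. reflexivity. Qed.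
Lemma SL2_mul A B : SL2 A -> SL2 B -> SL2 (mmul A B).
Proof. unfold SL2; intros HA HB; rewrite mdetM, HA, HB; ring. Qed.
Lemma SL2_minv A : SL2 A -> SL2 (minv A).
Proof. unfold SL2; rewrite mdet_minv; auto. Qed.
Lemma SL2_mid : SL2 mid.
Proof. m2_ring. Qed.

Lemma mtr_sq A : SL2 A -> mtr (mmul A A) = mtr A * mtr A - 2.
Proof. destruct A; m2_unfold; intro; nra. Qed.

Definition sign (e : R) : Prop := e * e = 1.

Lemma sign_mul e f : sign e -> sign f -> sign (e * f).
Proof. unfold sign; intros; nra. Qed.
Lemma sign_m1 : sign (-1). Proof. unfold sign; ring. Qed.
Lemma sign_1 : sign 1. Proof. unfold sign; ring. Qed.
Lemma Rabs_sign e : sign e -> Rabs e = 1.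
Proof.
  unfold sign; intro He.
  destruct (Rcase_abs e); [rewrite Rabs_left | rewrite Rabs_right]; nra.
Qed.

Ltac sign_tac := repeat (apply sign_mul || apply sign_m1 || apply sign_1 || assumption).

Lemma peq_sign A B : peq A B <-> exists e, sign e /\ A = mscale e B.
Proof.
  split.
  - intros [-> | ->]; [exists 1 | exists (-1)]; split; sign_tac; try reflexivity.
    symmetry; apply mscale1.
  - intros (e & He & ->).
    assert (e = 1 \/ e = -1) as [-> | ->] by (unfold sign in He; nra).
    + left; apply mscale1.
    + right; reflexivity.
Qed.

Lemma peq_mscale_sign A B e : sign e -> A = mscale e B -> peq A B.
Proof. intros He E; apply peq_sign; eauto. Qed.

Lemma peq_mulr A B C : peq A B -> peq (mmul A C) (mmul B C).
Proof.
  rewrite !peq_sign; intros (e & He & ->).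
  exists e; split; [exact He | apply mscale_mull].
Qed.

Lemma mscale_eq a b X : a = b -> mscale a X = mscale b X.
Proof. intros ->; reflexivity. Qed.

Lemma mscale_id a X : a = 1 -> mscale a X = X.
Proof. intros ->; apply mscale1. Qed.

Lemma mscale_sign_peq a b X Y : sign a -> sign b -> mscale a X = mscale b Y -> peq X Y.
Proof.
  intros Ha Hb E. apply (peq_mscale_sign _ _ (a * b)); [sign_tac |].
  apply (f_equal (mscale a)) in E. rewrite !mscaleA, Ha, mscale1 in E.
  rewrite E; apply mscale_eq; ring.
Qed.

Lemma peq_mtr0 X Y : peq X Y -> mtr Y = 0 -> mtr X = 0.
Proof. rewrite peq_sign; intros (e & _ & ->) H. rewrite mtr_mscale, H; ring. Qed.

Lemma comm_mscale e f A B :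
  Defs.comm (mscale e A) (mscale f B) = mscale (e * e * (f * f)) (Defs.comm A B).
Proof. unfold Defs.comm; m2_ring. Qed.

Lemma comm_peq A A' B B' : peq A A' -> peq B B' -> Defs.comm A B = Defs.comm A' B'.
Proof.
  rewrite !peq_sign. intros (e & He & ->) (f & Hf & ->).
  rewrite comm_mscale, He, Hf, Rmult_1_l. apply mscale1.
Qed.

Lemma SL2_mscale k A : sign k -> SL2 A -> SL2 (mscale k A).
Proof. unfold SL2, sign; intros Hk HA; rewrite mdet_mscale, Hk, HA; ring. Qed.

Lemma SL2_peq A B : peq A B -> SL2 B -> SL2 A.
Proof. rewrite peq_sign; intros (e & He & ->); apply SL2_mscale; auto. Qed.

Lemma hyperbolic_peq A B : peq A B -> hyperbolic B -> hyperbolic A.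
Proof.
  intros E [HB HtrB]. split; [exact (SL2_peq _ _ E HB) |].
  apply peq_sign in E as (e & He & ->).
  rewrite mtr_mscale, Rabs_mult, Rabs_sign by exact He. lra.
Qed.

Lemma hyperbolic_sq A : hyperbolic A -> hyperbolic (mmul A A).
Proof.
  intros [HA Htr]. split; [apply SL2_mul; auto |].
  rewrite mtr_sq by exact HA.
  assert (4 < mtr A * mtr A).
  { destruct (Rcase_abs (mtr A)); [rewrite Rabs_left in Htr | rewrite Rabs_right in Htr]; nra. }
  rewrite Rabs_right; lra.
Qed.

Definition involution (A : M2) : Prop := SL2 A /\ mtr A = 0.

Lemma involution_sq A : involution A -> mmul A A = mscale (-1) mid.
Proof. destruct A; unfold involution; m2_unfold; intros [H1 H2]. apply M2_ext; simpl; nsatz. Qed.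

Lemma involution_sqX A X : involution A -> mmul A (mmul A X) = mscale (-1) X.
Proof. intro H. rewrite <- mmulA, involution_sq, mscale_mull, mul1m by exact H. reflexivity. Qed.

Lemma involution_minv A : involution A -> minv A = mscale (-1) A.
Proof. destruct A; unfold involution; m2_unfold; intros [H1 H2]. apply M2_ext; simpl; nsatz. Qed.

Lemma sq_involution A : SL2 A -> mmul A A = mscale (-1) mid -> involution A.
Proof.
  intros HA Hsq. split; [exact HA |].
  apply (f_equal mtr) in Hsq.
  rewrite mtr_sq, mtr_mscale, mtr_mid in Hsq by exact HA. nra.
Qed.

Lemma involution_not_peq_mid A : involution A -> ~ peq A mid.
Proof.
  intros [_ Htr] E. apply peq_sign in E as (e & He & ->).
  rewrite mtr_mscale, mtr_mid in Htr. unfold sign in He. nra.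
Qed.

(** A lift whose square is [+I] is [+-I] itself. *)
Lemma involution_of_order2 A :
  SL2 A -> peq (mmul A A) mid -> ~ peq A mid -> involution A.
Proof.
  intros HA [Hsq | Hsq] Hnid; [exfalso | exact (sq_involution A HA Hsq)].
  apply Hnid. destruct A as [a b c d]; m2_unfold. injection Hsq; intros.
  assert (Htr : a + d <> 0) by nra.
  assert (b = 0) by (apply (Rmult_eq_reg_l (a + d)); [nra | exact Htr]).
  assert (c = 0) by (apply (Rmult_eq_reg_l (a + d)); [nra | exact Htr]).
  subst b c. assert (a = d) by nra. subst d.
  apply (peq_mscale_sign _ _ a); [unfold sign; nra |]. apply M2_ext; simpl; ring.
Qed.

Lemma involution_mopp A : involution A -> involution (mopp A).
Proof.
  unfold involution, mopp; intros [HA Htr].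
  split; [apply SL2_mscale; sign_tac | rewrite mtr_mscale, Htr; ring].
Qed.

(** With [p = [[a, b], [c, -a]]], [r = [[a', b'], [c', -a']]]:
    [(tr (p r) + 2) b b' = - (b - b')^2 - (a b' - a' b)^2]. *)
Lemma involution_mul_tr_same_side p r :
  involution p -> involution r -> 0 < e12 p * e12 r ->
  mtr (mmul p r) <= -2 /\ (mtr (mmul p r) = -2 -> p = r).
Proof.
  destruct p as [a b c d], r as [a' b' c' d']; unfold involution; m2_unfold.
  intros [Hp Hpt] [Hr Hrt] Hbb.
  assert (d = -a) by lra. assert (d' = -a') by lra. subst d d'.
  assert (Kp : b * c = -1 - a * a) by lra.
  assert (Kr : b' * c' = -1 - a' * a') by lra.
  set (u := b - b'). set (v := a * b' - a' * b).
  assert (Key : (a * a' + b * c' + (c * b' + - a * - a') + 2) * (b * b') = - u * u - v * v).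
  { transitivity (2 * a * a' * b * b' + b * b * (b' * c') + b' * b' * (b * c) + 2 * b * b');
      [ring | rewrite Kp, Kr; unfold u, v; ring]. }
  assert (0 <= u * u) by nra. assert (0 <= v * v) by nra.
  split; [nra |].
  intro Htr. rewrite Htr in Key.
  assert (Hu : u = 0) by nra. assert (Hv : v = 0) by nra. unfold u, v in Hu, Hv.
  assert (b = b') by lra. subst b'.
  assert (Hb : b <> 0) by nra.
  assert (a = a') by (apply (Rmult_eq_reg_l b); nra). subst a'.
  assert (c = c') by (apply (Rmult_eq_reg_l b); nra). subst c'.
  reflexivity.
Qed.

Lemma involution_e12_neq0 A : involution A -> e12 A <> 0.
Proof. destruct A; unfold involution; m2_unfold; intros [H1 H2] H0. subst. nra. Qed.

(** The reverse Cauchy-Schwarz inequality for the Lorentzian form [tr (p r)]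
    on trace-zero matrices, restricted to the hyperboloid [det = 1]. *)
Lemma involution_mul_tr p r : involution p -> involution r ->
  2 <= Rabs (mtr (mmul p r)) /\ (Rabs (mtr (mmul p r)) = 2 -> peq p r).
Proof.
  intros Hp Hr.
  assert (Hb : e12 p * e12 r <> 0)
    by (apply Rmult_integral_contrapositive; split; apply involution_e12_neq0; assumption).
  destruct (Rlt_or_le 0 (e12 p * e12 r)) as [Hpos | Hneg].
  - destruct (involution_mul_tr_same_side p r Hp Hr Hpos) as [Hle Heq].
    rewrite Rabs_left by lra. split; [lra | intro; left; apply Heq; lra].
  - assert (Hpos : 0 < e12 p * e12 (mopp r)) by (unfold mopp, mscale; simpl; lra).
    destruct (involution_mul_tr_same_side p (mopp r) Hp (involution_mopp r Hr) Hpos) as [Hle Heq].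
    assert (Hopp : mtr (mmul p (mopp r)) = - mtr (mmul p r)) by (unfold mopp; m2_ring).
    rewrite Hopp in Hle, Heq. rewrite Rabs_right by lra.
    split; [lra | intro; right; apply Heq; lra].
Qed.

Lemma involution_mul_hyperbolic p r :
  involution p -> involution r -> ~ peq p r -> hyperbolic (mmul p r).
Proof.
  intros Hp Hr Hpr. split; [apply SL2_mul; [apply Hp | apply Hr] |].
  destruct (involution_mul_tr p r Hp Hr) as [Hle Heq].
  destruct Hle as [Hlt | Heq2]; [exact Hlt | exfalso; apply Hpr, Heq; auto].
Qed.

Lemma involution_mul_tr_neq0 p r :
  involution p -> involution r -> mtr (mmul p r) <> 0.
Proof.
  intros Hp Hr H0. destruct (involution_mul_tr p r Hp Hr) as [Hle _].
  rewrite H0, Rabs_R0 in Hle. lra.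
Qed.

Ltac inv_norm :=
  mnorm;
  repeat (match goal with H : involution _ |- _ =>
            progress rewrite ?(involution_minv _ H), ?(involution_sqX _ _ H),
                             ?(involution_sq _ H) end; mnorm).

Lemma cosh_sq_sub_sinh_sq x : cosh x * cosh x - sinh x * sinh x = 1.
Proof.
  unfold cosh, sinh.
  assert (exp x * exp (- x) = 1) by (rewrite <- exp_plus, Rplus_opp_r; apply exp_0).
  field_simplify. nra.
Qed.

Lemma mdet_span x y M :
  mdet (madd (mscale x mid) (mscale y M)) = x * x + x * y * mtr M + y * y * mdet M.
Proof. m2_ring. Qed.

(** [oneparam A t = cosh (t/2) I + sinh (t/2) / sinh (l/2) M] where
    [M = sign (tr A) A - cosh (l/2) I] is traceless with [det M = - sinh (l/2)^2]. *)
Lemma oneparam_SL2 A t : hyperbolic A -> SL2 (oneparam A t).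
Proof.
  intros [HA Htr]. unfold oneparam, SL2. rewrite mdet_span.
  assert (Hc : 1 < halftr A) by (unfold halftr; lra).
  assert (Hsg : trsign A * mtr A = 2 * halftr A /\ trsign A * trsign A = 1).
  { unfold trsign, halftr. destruct (Rlt_dec (mtr A) 0).
    - rewrite Rabs_left by lra. split; field.
    - rewrite Rabs_right by lra. split; field. }
  destruct Hsg as [Hsg1 Hsg2].
  set (c := halftr A) in *. set (sg := trsign A) in *.
  assert (HtrM : mtr (madd (mscale sg A) (mscale (- c) mid)) = 0).
  { transitivity (sg * mtr A - 2 * c); [m2_ring | lra]. }
  assert (HdetM : mdet (madd (mscale sg A) (mscale (- c) mid)) = 1 - c * c).
  { transitivity (sg * sg * mdet A - c * (sg * mtr A) + c * c); [m2_ring |].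
    unfold SL2 in HA. rewrite HA, Hsg1, Hsg2. ring. }
  rewrite HtrM, HdetM.
  assert (Hs2 : sqrt (c * c - 1) * sqrt (c * c - 1) = c * c - 1) by (apply sqrt_sqrt; nra).
  assert (Hs0 : 0 < sqrt (c * c - 1)) by (apply sqrt_lt_R0; nra).
  pose proof (cosh_sq_sub_sinh_sq (t / 2)) as Hch.
  set (s := sqrt (c * c - 1)) in *.
  transitivity (cosh (t / 2) * cosh (t / 2) - sinh (t / 2) * sinh (t / 2) * ((c * c - 1) / (s * s)));
    [field; lra | rewrite <- Hs2; field_simplify; lra].
Qed.

Definition commute (A B : M2) : Prop := mmul A B = mmul B A.

(** [p A p^-1 = A^-1] when [det p = 1]. *)
Definition reverses (p A : M2) : Prop := mmul (minv A) p = mmul p A.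

(** [oneparam A t] lies in the span of [I] and [A]. *)
Lemma commute_oneparam A t B : commute A B -> commute (oneparam A t) B.
Proof.
  unfold commute, oneparam. set (c := halftr A). set (s := sqrt _). set (sg := trsign A).
  clearbody c s sg. intro H. destruct A, B; m2_unfold. injection H; intros. apply M2_ext; simpl; nsatz.
Qed.

Lemma reverses_oneparam p A t : reverses p A -> reverses p (oneparam A t).
Proof.
  unfold reverses, oneparam. set (c := halftr A). set (s := sqrt _). set (sg := trsign A).
  clearbody c s sg. intro H. destruct A, p; m2_unfold. injection H; intros. apply M2_ext; simpl; nsatz.
Qed.

Lemma reverses_peq p A B : peq A B -> reverses p B -> reverses p A.
Proof.
  unfold reverses; rewrite peq_sign. intros (e & _ & ->) H.
  rewrite minv_mscale, mscale_mull, mscale_mulr, H. reflexivity.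
Qed.

Lemma involution_mul_minv p x :
  SL2 x -> involution p -> reverses p x -> involution (mmul p (minv x)).
Proof.
  intros Hx Hp R. apply sq_involution; [apply SL2_mul; [apply Hp | apply SL2_minv, Hx] |].
  rewrite mmulA, (mmul_eq_assoc _ _ _ _ R), involution_sqX, mulmV by assumption.
  reflexivity.
Qed.

Definition cj (g A : M2) : M2 := mmul g (mmul A (minv g)).

Lemma cj_mul g A B : SL2 g -> cj g (mmul A B) = mmul (cj g A) (cj g B).
Proof. intro Hg. unfold cj. mnorm. rewrite mulKm by exact Hg. reflexivity. Qed.

Lemma cj_mscale g k A : cj g (mscale k A) = mscale k (cj g A).
Proof. unfold cj; mnorm; reflexivity. Qed.

Lemma cj_mid g : SL2 g -> cj g mid = mid.
Proof. intro Hg; unfold cj; rewrite mul1m; apply mulmV, Hg. Qed.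

Lemma cj_commute g A : SL2 g -> commute g A -> cj g A = A.
Proof. unfold commute, cj; intros Hg H. rewrite <- mmulA, H, mmulA, mulmV, mulm1 by exact Hg. reflexivity. Qed.

Lemma peq_cj g A B : peq A B -> peq (cj g A) (cj g B).
Proof. rewrite !peq_sign; intros (e & He & ->). exists e; split; [exact He | apply cj_mscale]. Qed.

Lemma involution_cj g A : SL2 g -> involution A -> involution (cj g A).
Proof.
  intros Hg [HA Htr]. split.
  - unfold cj; repeat apply SL2_mul; auto using SL2_minv.
  - unfold cj; rewrite mtrC, mmulA, mulVm, mulm1; auto.
Qed.

Record p5_lift (q : nat -> M2) : Prop := {
  p5_inv1 : involution (q 1%nat);
  p5_inv2 : involution (q 2%nat);
  p5_inv3 : involution (q 3%nat);
  p5_inv4 : involution (q 4%nat);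
  p5_q5 : peq (q 5%nat) mid;
  p5_inv6 : involution (q 6%nat);
  p5_word : peq (mmul (q 1%nat) (mmul (q 2%nat) (mmul (q 3%nat)
                  (mmul (q 4%nat) (mmul (q 5%nat) (q 6%nat)))))) mid }.

Lemma involution_order2 A : involution A -> SL2 A /\ peq (mmul A A) mid.
Proof. intro H. split; [apply H | right; apply involution_sq, H]. Qed.

Lemma peq_mid_order2 A : peq A mid -> SL2 A /\ peq (mmul A A) mid.
Proof.
  intro H. split; [exact (SL2_peq _ _ H SL2_mid) |].
  apply peq_sign in H as (e & He & ->). left.
  rewrite mscale_mull, mscale_mulr, mscaleA, mul1m, He. apply mscale1.
Qed.

Lemma p5_liftP q : GammaRep q /\ kernel_q5_only q <-> p5_lift q.
Proof.
  split.
  - intros [[HG Hword] [H5 Hker]].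
    assert (Hinv : forall i, (1 <= i <= 6)%nat -> i <> 5%nat -> involution (q i)).
    { intros i Hi Hi5. destruct (HG i Hi). apply involution_of_order2; auto. }
    constructor; auto; apply Hinv; lia.
  - intros [I1 I2 I3 I4 Q5 I6 Hword].
    assert (Hinv : forall i, (1 <= i <= 6)%nat -> i <> 5%nat -> involution (q i)).
    { intros i Hi Hi5. destruct i as [|[|[|[|[|[|[|i]]]]]]]; try lia; assumption. }
    split; split; auto.
    + intros i Hi. destruct (Nat.eq_dec i 5) as [-> | Hi5].
      * apply peq_mid_order2, Q5.
      * apply involution_order2, Hinv; auto.
    + intros i Hi Hi5. apply involution_not_peq_mid, Hinv; auto.
Qed.

Lemma p5_lift_cj g q : SL2 g -> p5_lift q -> p5_lift (fun i => cj g (q i)).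
Proof.
  intros Hg [I1 I2 I3 I4 Q5 I6 Hword].
  constructor; try (apply involution_cj; assumption).
  - rewrite <- (cj_mid g Hg). apply peq_cj, Q5.
  - rewrite <- !cj_mul, <- (cj_mid g Hg) by exact Hg. apply peq_cj, Hword.
Qed.

Definition rep_peq (rho sigma : SRep) : Prop :=
  peq (ra1 rho) (ra1 sigma) /\ peq (rb1 rho) (rb1 sigma) /\
  peq (ra2 rho) (ra2 sigma) /\ peq (rb2 rho) (rb2 sigma).

(** Conjugating the lift [q] absorbs the conjugation in the definition of [P_5]. *)
Lemma inP5_iff rho : inP5 rho <-> exists q, p5_lift q /\ rep_peq rho (restrict q).
Proof.
  split.
  - intros (q & HG & Hker & g & Hg & E1 & E2 & E3 & E4).
    exists (fun i => cj g (q i)). split; [apply p5_lift_cj, p5_liftP; auto |].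
    unfold rep_peq, restrict; simpl. rewrite <- !cj_mul by exact Hg. auto.
  - intros (q & Hq & E1 & E2 & E3 & E4). apply p5_liftP in Hq as [HG Hker].
    exists q; split; [exact HG | split; [exact Hker |]].
    exists mid; split; [exact SL2_mid |]. rewrite minv1, !mulm1, !mul1m. auto.
Qed.

Definition lift_flow_a1 (x : M2) (q : nat -> M2) : nat -> M2 :=
  fun i => match i with 2%nat | 3%nat => mmul (q i) (minv x) | _ => q i end.

Definition lift_flow_c1 (g : M2) (q : nat -> M2) : nat -> M2 :=
  fun i => match i with 4%nat | 5%nat | 6%nat => cj g (q i) | _ => q i end.

Lemma restrict_lift_flow_a1 x q : SL2 x -> reverses (q 2%nat) x ->
  restrict (lift_flow_a1 x q) =
  mkSRep (mmul (q 3%nat) (q 2%nat)) (mmul (mmul (q 1%nat) (q 2%nat)) (minv x))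
         (mmul (q 6%nat) (q 5%nat)) (mmul (q 4%nat) (q 5%nat)).
Proof.
  intros Hx R2. unfold restrict; cbn [lift_flow_a1]. f_equal.
  - rewrite mmulA, (mmul_eq_assoc _ _ _ _ R2), mulmV, mulm1 by exact Hx. reflexivity.
  - symmetry; apply mmulA.
Qed.

Section P5Lift.

Variable q : nat -> M2.
Hypothesis Hq : p5_lift q.

Let I1 := p5_inv1 q Hq.
Let I2 := p5_inv2 q Hq.
Let I3 := p5_inv3 q Hq.
Let I4 := p5_inv4 q Hq.
Let I6 := p5_inv6 q Hq.

Local Notation W := (mmul (q 3%nat) (mmul (q 2%nat) (q 1%nat))).

Lemma p5_word_sign : exists e5 e, sign e5 /\ sign e /\ q 5%nat = mscale e5 mid /\
  mmul (q 1%nat) (mmul (q 2%nat) (mmul (q 3%nat) (mmul (q 4%nat) (mmul (q 5%nat) (q 6%nat)))))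
  = mscale e mid.
Proof.
  destruct (proj1 (peq_sign _ _) (p5_q5 q Hq)) as (e5 & He5 & E5).
  destruct (proj1 (peq_sign _ _) (p5_word q Hq)) as (e & He & Hw).
  exists e5, e. auto.
Qed.

Lemma not_peq_q3_q2 : ~ peq (q 3%nat) (q 2%nat).
Proof.
  intro E. apply peq_sign in E as (s & Hs & E3).
  destruct p5_word_sign as (e5 & e & He5 & He & E5 & Hw).
  rewrite E3, E5 in Hw. apply (f_equal (fun M => mmul M (q 6%nat))) in Hw.
  revert Hw; inv_norm; intro Hw.
  apply (involution_mul_tr_neq0 _ _ I1 I4).
  apply (peq_mtr0 _ (q 6%nat)); [| apply I6].
  eapply mscale_sign_peq; [| exact He | exact Hw]. sign_tac.
Qed.

Lemma not_peq_q4_q6 : ~ peq (q 4%nat) (q 6%nat).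
Proof.
  intro E. apply peq_sign in E as (s & Hs & E4).
  destruct p5_word_sign as (e5 & e & He5 & He & E5 & Hw).
  rewrite E4, E5 in Hw. apply (f_equal (mmul (q 1%nat))) in Hw.
  revert Hw; inv_norm; intro Hw.
  apply (involution_mul_tr_neq0 _ _ I2 I3).
  apply (peq_mtr0 _ (q 1%nat)); [| apply I1].
  eapply mscale_sign_peq; [| exact He | exact Hw]. sign_tac.
Qed.

Lemma peq_q456_W : peq (mmul (q 4%nat) (mmul (q 5%nat) (q 6%nat))) W.
Proof.
  destruct p5_word_sign as (e5 & e & He5 & He & E5 & Hw).
  apply (f_equal (mmul W)) in Hw. revert Hw; inv_norm; intro Hw.
  eapply mscale_sign_peq; [| exact He | exact Hw]. sign_tac.
Qed.

Lemma peq_W_q4q6 : peq W (mmul (q 4%nat) (q 6%nat)).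
Proof.
  destruct p5_word_sign as (e5 & e & He5 & He & E5 & Hw).
  rewrite E5 in Hw. apply (f_equal (mmul W)) in Hw. revert Hw; inv_norm; intro Hw.
  eapply mscale_sign_peq; [exact He | | symmetry; exact Hw]. sign_tac.
Qed.

Lemma hyperbolic_q3q2 : hyperbolic (mmul (q 3%nat) (q 2%nat)).
Proof. exact (involution_mul_hyperbolic _ _ I3 I2 not_peq_q3_q2). Qed.

Lemma hyperbolic_W : hyperbolic W.
Proof.
  apply (hyperbolic_peq _ _ peq_W_q4q6).
  exact (involution_mul_hyperbolic _ _ I4 I6 not_peq_q4_q6).
Qed.

Lemma comm_q3q2_q1q2 :
  Defs.comm (mmul (q 3%nat) (q 2%nat)) (mmul (q 1%nat) (q 2%nat)) = mscale (-1) (mmul W W).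
Proof. unfold Defs.comm; inv_norm. apply mscale_eq; ring. Qed.

Lemma reverses_q2_q3q2 : reverses (q 2%nat) (mmul (q 3%nat) (q 2%nat)).
Proof. unfold reverses; inv_norm. apply mscale_id; ring. Qed.

Lemma reverses_q3_q3q2 : reverses (q 3%nat) (mmul (q 3%nat) (q 2%nat)).
Proof. unfold reverses; inv_norm. apply mscale_eq; ring. Qed.

Lemma p5_lift_flow_a1 x : SL2 x -> reverses (q 2%nat) x -> reverses (q 3%nat) x ->
  p5_lift (lift_flow_a1 x q).
Proof.
  intros Hx R2 R3.
  constructor; cbn [lift_flow_a1]; auto using p5_q5, involution_mul_minv.
  mnorm. rewrite (mmul_eq_assoc _ _ _ _ R3), mulKVm by exact Hx. apply p5_word, Hq.
Qed.

Lemma p5_lift_flow_c1 g : SL2 g -> commute g W -> p5_lift (lift_flow_c1 g q).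
Proof.
  intros Hg HW.
  constructor; cbn [lift_flow_c1]; auto using involution_cj.
  - rewrite <- (cj_mid g Hg). apply peq_cj, Hq.
  - rewrite <- !(cj_mul g) by exact Hg.
    destruct (proj1 (peq_sign _ _) peq_q456_W) as (k & Hk & ->).
    rewrite cj_mscale, cj_commute by assumption.
    inv_norm. eapply peq_mscale_sign; [| reflexivity]. sign_tac.
Qed.

End P5Lift.

Lemma inP5_flow_a1 t rho : inP5 rho -> inP5 (flow_a1 t rho).
Proof.
  rewrite !inP5_iff. intros (q & Hq & E1 & E2 & E3 & E4).
  set (x := oneparam (ra1 rho) t).
  assert (Hx : SL2 x) by (apply oneparam_SL2, (hyperbolic_peq _ _ E1), hyperbolic_q3q2, Hq).
  assert (R2 : reverses (q 2%nat) x)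
    by (apply reverses_oneparam, (reverses_peq _ _ _ E1), reverses_q2_q3q2, Hq).
  assert (R3 : reverses (q 3%nat) x)
    by (apply reverses_oneparam, (reverses_peq _ _ _ E1), reverses_q3_q3q2, Hq).
  exists (lift_flow_a1 x q). split; [apply p5_lift_flow_a1; assumption |].
  rewrite restrict_lift_flow_a1 by assumption.
  repeat split; simpl; auto using peq_mulr.
Qed.

Lemma inP5_flow_c1 t rho : inP5 rho -> inP5 (flow_c1 t rho).
Proof.
  rewrite !inP5_iff. intros (q & Hq & E1 & E2 & E3 & E4).
  set (W := mmul (q 3%nat) (mmul (q 2%nat) (q 1%nat))).
  assert (HC : Defs.comm (ra1 rho) (rb1 rho) = mscale (-1) (mmul W W))
    by (rewrite (comm_peq _ _ _ _ E1 E2); apply comm_q3q2_q1q2, Hq).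
  set (z := oneparam (Defs.comm (ra1 rho) (rb1 rho)) t).
  assert (Hz : SL2 z).
  { apply oneparam_SL2. rewrite HC.
    apply (hyperbolic_peq _ _ (peq_mscale_sign _ _ _ sign_m1 eq_refl)), hyperbolic_sq, hyperbolic_W, Hq. }
  assert (HzW : commute z W).
  { apply commute_oneparam. rewrite HC. unfold commute. mnorm. reflexivity. }
  exists (lift_flow_c1 z q). split; [apply p5_lift_flow_c1; assumption |].
  unfold restrict; cbn [lift_flow_c1]. rewrite <- !(cj_mul z) by exact Hz.
  repeat split; [exact E1 | exact E2 | exact (peq_cj z _ _ E3) | exact (peq_cj z _ _ E4)].
Qed.

Theorem mainTheorem3 :
  forall (rho : SRep) (t : R),
    inP5 rho -> inP5 (flow_a1 t rho) /\ inP5 (flow_c1 t rho).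
Proof.
  intros rho t H. split; [apply inP5_flow_a1 | apply inP5_flow_c1]; exact H.
Qed.
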